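(* Let $(L_*,b)$ and $(M_*,b)$ be chain complexes, $i:(L_*,b)\to(M_*,b)$ and $p:(M_*,b)\to(L_*,b)$ chain maps, and $h$ a map of degree $+1$ on $M_*$ with $ip=1+bh+hb$. Let $\delta$ be a small perturbation, put $A=(1-\delta h)^{-1}\delta$, and define $$i_\infty=i+hAi,\quad p_\infty=p+pAh,\quad b_\infty=b+pAi.$$ Then each of the following chain maps is null-homotopic: - $i\circ(p i_\infty-1):(L_*,b_\infty)\to(M_*,b)$; - $(p_\infty i-1)\circ p:(M_*,b)\to(L_*,b_\infty)$; - $(p i_\infty-1)\circ p_\infty:(M_*,b+\delta)\to(L_*,b)$; - $i_\infty\circ(p_\infty i-1):(L_*,b)\to(M_*,b+\delta)$.
   Context: Complexes are chain complexes of modules over a ring, with differentials of degree $-1$. A perturbation $\delta$ is a graded map $M_*\to M_*$ of the same degree as $b$ such that $(b+\delta)^2=0$. It is called small if $1-\delta h$ is invertible. It is known (homological perturbation lemma, HR version) that for a small perturbation, $(L_*,b_\infty)$ is a complex, that $i_\infty:(L_*,b_\infty)\to(M_*,b+\delta)$ and $p_\infty:(M_*,b+\delta)\to(L_*,b_\infty)$ are chain maps, and that $i_\infty p_\infty=1+(b+\delta)h_\infty+h_\infty(b+\delta)$, where $h_\infty=h+hAh$. Moreover, $p_\infty i-1:(L_*,b)\to(L_*,b_\infty)$ and $p i_\infty-1:(L_*,b_\infty)\to(L_*,b)$ are chain maps. *)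

(* Graded modules are int-indexed families of R-modules;
   a graded map M_* -> N_* is represented by all its components f i j : M i -> N j
   ("matrix" representation of a map on the direct sum), and "degree d" means
   that f i j = 0 unless j = i + d. *)
From HB Require Import structures.
From mathcomp Require Import all_boot all_order all_algebra.
Set Implicit Arguments. Unset Strict Implicit. Unset Printing Implicit Defensive.
Import GRing.Theory.
Local Open Scope ring_scope.

Section Graded.
Variable R : pzRingType.

Definition gmod := int -> lmodType R.

Definition gmap (M N : gmod) := forall i j : int, M i -> N j.

Definition is_gmap (M N : gmod) (d : int) (f : gmap M N) : Prop :=
  (forall i j, j != i + d -> forall x, f i j x = 0) /\
  (forall i j (a : R) (x y : M i), f i j (a *: x + y) = a *: f i j x + f i j y).

Definition gequiv (M N : gmod) (f g : gmap M N) : Prop :=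
  forall i j (x : M i), f i j x = g i j x.

Definition gid (M : gmod) : gmap M M := fun i j x =>
  match i =P j with ReflectT e => ecast k (M k) e x | ReflectF _ => 0 end.

Definition g0 (M N : gmod) : gmap M N := fun i j _ => 0.

Definition gadd (M N : gmod) (f g : gmap M N) : gmap M N :=
  fun i j x => f i j x + g i j x.

Definition gopp (M N : gmod) (f : gmap M N) : gmap M N :=
  fun i j x => - f i j x.

Definition gsub (M N : gmod) (f g : gmap M N) : gmap M N := gadd f (gopp g).

(* gcomp d f g = g o f, where f has degree d (f is applied first) *)
Definition gcomp (M N P : gmod) (d : int) (f : gmap M N) (g : gmap N P) : gmap M P :=
  fun i k x => g (i + d) k (f i (i + d) x).

Definition is_complex (M : gmod) (b : gmap M M) : Prop :=
  is_gmap (-1) b /\ gequiv (gcomp (-1) b b) (@g0 M M).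

Definition is_chain_map (M N : gmod) (bM : gmap M M) (bN : gmap N N)
  (f : gmap M N) : Prop :=
  is_gmap 0 f /\ gequiv (gcomp 0 f bN) (gcomp (-1) bM f).

Definition null_homotopic (M N : gmod) (bM : gmap M M) (bN : gmap N N)
  (f : gmap M N) : Prop :=
  exists H : gmap M N, is_gmap 1 H /\
    gequiv f (gadd (gcomp 1 H bN) (gcomp (-1) bM H)).

End Graded.
Arguments gid {R} M i j.

(* Expanding the inverse on either side gives
   δhA = A - δ = Ahδ.  Multiplying Ab + bA + AipA on the left by 1 - δh and
   using ip = 1 + bh + hb, b^2 = 0 and bδ + δb = -δ^2 gives 0, and 1 - δh is
   invertible, so AipA = -(Ab + bA).  These identities yield the perturbation
   lemma: i_∞ and p_∞ are chain maps and i_∞ p_∞ = 1 + (b+δ)h_∞ + h_∞(b+δ) with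
   h_∞ = h + hAh.  Together with δ i_∞ = A i, p_∞ δ = p A, δ h_∞ = A h and
   h_∞ δ = h A, the four maps are null-homotopic via h i_∞, p_∞ h, p h_∞ and
   h_∞ i respectively; for instance
   i (p i_∞ - 1) = (ip - 1) i_∞ + hδ i_∞ = b (h i_∞) + h (b + δ) i_∞
                 = b (h i_∞) + (h i_∞) b_∞. *)

From HB Require Import structures.
From mathcomp Require Import all_boot all_order all_algebra.
From mathcomp Require Import boolp ring.
Set Implicit Arguments. Unset Strict Implicit. Unset Printing Implicit Defensive.
Import GRing.Theory.
Local Open Scope ring_scope.

(* The square-zero extension Z ⋉ V is a commutative ring into which V embeds
   additively and injectively, so [ring] decides identities in any zmodType. *)
Section SquareZeroExtension.
Variable V : zmodType.

Definition sqz_ext := (int * V)%type.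
HB.instance Definition _ := GRing.Zmodule.on sqz_ext.

Definition sqz_mul (x y : sqz_ext) : sqz_ext := (x.1 * y.1, y.2 *~ x.1 + x.2 *~ y.1).

Lemma sqz_mulA : associative sqz_mul.
Proof.
move=> [a x] [b y] [c z]; rewrite /sqz_mul /= mulrA; congr pair.
by rewrite !mulrzDl -!mulrzA [b * a]mulrC [c * a]mulrC addrA.
Qed.

Lemma sqz_mulC : commutative sqz_mul.
Proof. by move=> [a x] [b y]; rewrite /sqz_mul /= mulrC addrC. Qed.

Lemma sqz_mul1 : left_id (1, 0) sqz_mul.
Proof. by move=> [a x]; rewrite /sqz_mul /= mul1r mulr1z mul0rz addr0. Qed.

Lemma sqz_mulDl : left_distributive sqz_mul +%R.
Proof.
move=> [a x] [b y] [c z]; rewrite /sqz_mul /= mulrDl; congr pair.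
by rewrite mulrzDr mulrzDl addrACA.
Qed.

Lemma sqz_one_neq0 : (1, 0) != 0 :> sqz_ext.
Proof. by []. Qed.

HB.instance Definition _ := GRing.Zmodule_isComNzRing.Build sqz_ext
  sqz_mulA sqz_mulC sqz_mul1 sqz_mulDl sqz_one_neq0.

Definition sqz_in (x : V) : sqz_ext := (0, x).

Lemma sqz_in_is_zmod_morphism : zmod_morphism sqz_in.
Proof. by move=> x y; rewrite /sqz_in; congr pair; rewrite subr0. Qed.

HB.instance Definition _ := GRing.isZmodMorphism.Build V sqz_ext sqz_in
  sqz_in_is_zmod_morphism.

Lemma sqz_in_inj : injective sqz_in.
Proof. by move=> x y []. Qed.

End SquareZeroExtension.

Ltac zmod_ring := apply: sqz_in_inj; ring.

(* Composition in the usual order, annotated with the degree of the map applied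
   first ([gcomp] takes its arguments in diagrammatic order). *)
Notation "g \o[ d ] f" := (gcomp d f g) (at level 40, left associativity,
  format "g  \o[ d ]  f") : ring_scope.

Section GradedMaps.
Variable R : pzRingType.
Implicit Types M N P Q : gmod R.

Lemma gmap_ext M N (f g : gmap M N) : gequiv f g -> f = g.
Proof. by move=> fg; do 3!apply: functional_extensionality_dep => ?; apply: fg. Qed.

HB.instance Definition _ M N := gen_eqMixin (gmap M N).
HB.instance Definition _ M N := gen_choiceMixin (gmap M N).

Section Zmodule.
Variables M N : gmod R.
Implicit Types f g k : gmap M N.

Lemma gaddA : associative (@gadd R M N).
Proof. by move=> f g k; apply: gmap_ext => i j x; apply: addrA. Qed.

Lemma gaddC : commutative (@gadd R M N).
Proof. by move=> f g; apply: gmap_ext => i j x; apply: addrC. Qed.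

Lemma gadd0 : left_id (@g0 R M N) (@gadd R M N).
Proof. by move=> f; apply: gmap_ext => i j x; apply: add0r. Qed.

Lemma gaddN : left_inverse (@g0 R M N) (@gopp R M N) (@gadd R M N).
Proof. by move=> f; apply: gmap_ext => i j x; apply: addNr. Qed.

HB.instance Definition _ := GRing.isZmodule.Build (gmap M N) gaddA gaddC gadd0 gaddN.

Lemma gaddE f g i j x : (f + g) i j x = f i j x + g i j x. Proof. by []. Qed.
Lemma goppE f i j x : (- f) i j x = - f i j x. Proof. by []. Qed.
Lemma g0E i j x : (0 : gmap M N) i j x = 0. Proof. by []. Qed.

End Zmodule.

Definition gadditive M N (f : gmap M N) := forall i j, {morph f i j : x y / x + y}.

Lemma gmap_additive M N d (f : gmap M N) : is_gmap d f -> gadditive f.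
Proof. by move=> [_ lin] i j x y; rewrite -[x]scale1r lin !scale1r. Qed.

Lemma gadditive0 M N (f : gmap M N) : gadditive f -> forall i j, f i j 0 = 0.
Proof. by move=> af i j; apply: (addIr (f i j 0)); rewrite -af !add0r. Qed.

Lemma gadditiveN M N (f : gmap M N) :
  gadditive f -> forall i j x, f i j (- x) = - f i j x.
Proof. by move=> af i j x; apply: (addIr (f i j x)); rewrite -af !addNr gadditive0. Qed.

Lemma gadditive_add M N (f g : gmap M N) :
  gadditive f -> gadditive g -> gadditive (f + g).
Proof. by move=> af ag i j x y; rewrite !gaddE af ag addrACA. Qed.

Lemma gadditive_comp M N P d (f : gmap M N) (g : gmap N P) :
  gadditive f -> gadditive g -> gadditive (g \o[d] f).
Proof. by move=> af ag i j x y; rewrite /gcomp af ag. Qed.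

Lemma is_gmap_add M N d (f g : gmap M N) :
  is_gmap d f -> is_gmap d g -> is_gmap d (f + g).
Proof.
move=> [f0 lf] [g0 lg]; split=> [i j ji x | i j a x y]; rewrite !gaddE.
  by rewrite f0 // g0 // addr0.
by rewrite lf lg scalerDr addrACA.
Qed.

Lemma is_gmap_comp M N P d e c (f : gmap M N) (g : gmap N P) :
  is_gmap d f -> is_gmap e g -> d + e = c -> is_gmap c (g \o[d] f).
Proof.
move=> [f0 lf] [g0 lg] <-; split=> [i j ji x | i j a x y]; rewrite /gcomp.
  by rewrite g0 // -addrA.
by rewrite lf lg.
Qed.

Lemma gid_eq M i (x : M i) : gid M i i x = x.
Proof. by rewrite /gid; case: eqP => // e; rewrite (eq_irrelevance e erefl). Qed.

Lemma gid_neq M i j (x : M i) : i != j -> gid M i j x = 0.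
Proof. by rewrite /gid; case: eqP. Qed.

Lemma is_gmap_id M : is_gmap 0 (gid M).
Proof.
split=> [i j | i j a x y]; first by rewrite addr0 eq_sym => ji x; rewrite gid_neq.
have [<-|ij] := eqVneq i j; first by rewrite !gid_eq.
by rewrite !gid_neq // scaler0 addr0.
Qed.

Lemma gcompDl M N P d (g g' : gmap N P) (f : gmap M N) :
  (g + g') \o[d] f = g \o[d] f + g' \o[d] f.
Proof. by []. Qed.

Lemma gcompNl M N P d (g : gmap N P) (f : gmap M N) : (- g) \o[d] f = - (g \o[d] f).
Proof. by []. Qed.

Lemma gcompDr M N P d (g : gmap N P) (f f' : gmap M N) :
  gadditive g -> g \o[d] (f + f') = g \o[d] f + g \o[d] f'.
Proof. by move=> ag; apply: gmap_ext => i j x; rewrite /gcomp !gaddE ag. Qed.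

Lemma gcompNr M N P d (g : gmap N P) (f : gmap M N) :
  gadditive g -> g \o[d] (- f) = - (g \o[d] f).
Proof. by move=> ag; apply: gmap_ext => i j x; rewrite /gcomp !goppE (gadditiveN ag). Qed.

Lemma gcomp0r M N P d (g : gmap N P) : gadditive g -> g \o[d] (0 : gmap M N) = 0.
Proof. by move=> ag; apply: gmap_ext => i j x; rewrite /gcomp !g0E (gadditive0 ag). Qed.

Lemma gcompA M N P Q d1 d2 d3 (f : gmap M N) (g : gmap N P) (k : gmap P Q) :
  d1 + d2 = d3 -> k \o[d3] (g \o[d1] f) = (k \o[d2] g) \o[d1] f.
Proof. by move=> <-; apply: gmap_ext => i j x; rewrite /gcomp addrA. Qed.

Lemma gcomp1l M N d (f : gmap M N) : is_gmap d f -> gid N \o[d] f = f.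
Proof.
move=> [f0 _]; apply: gmap_ext => i j x; rewrite /gcomp.
have [<-|ij] := eqVneq (i + d) j; first by rewrite gid_eq.
by rewrite gid_neq // f0 // eq_sym.
Qed.

Lemma gcomp1r M N (f : gmap M N) : f \o[0] gid M = f.
Proof.
apply: gmap_ext => i j x; rewrite /gcomp.
by case: (i + 0) / (esym (addr0 i)); rewrite gid_eq.
Qed.

Lemma gcomp_ctx M N P Q d1 d2 (u : gmap M N) (v : gmap N P) (w : gmap M P)
  (X : gmap P Q) : v \o[d1] u = w -> X \o[d2] v \o[d1] u = X \o[d1 + d2] w.
Proof. by move=> <-; apply: gmap_ext => a b x; rewrite /gcomp addrA. Qed.

Lemma gcomp_ctx3 M N P Q S d1 d2 d3 (u : gmap M N) (v : gmap N P) (w : gmap P Q)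
  (z : gmap M Q) (X : gmap Q S) :
  w \o[d2] v \o[d1] u = z -> X \o[d3] w \o[d2] v \o[d1] u = X \o[d1 + d2 + d3] z.
Proof. by move=> <-; apply: gmap_ext => a b x; rewrite /gcomp !addrA. Qed.

Lemma null_homotopicP M N (bM : gmap M M) (bN : gmap N N) (f H : gmap M N) :
  is_gmap 1 H -> f = bN \o[1] H + H \o[-1] bM -> null_homotopic bM bN f.
Proof. by move=> H_deg ->; exists H. Qed.

End GradedMaps.

Arguments gcomp_ctx {R M N P Q d1 d2 u v w X}.
Arguments gcomp_ctx3 {R M N P Q S d1 d2 d3 u v w z X}.

Create HintDb gdegree.

Ltac gdegree := repeat first
  [ eassumption | solve [eauto with gdegree] | apply: is_gmap_id
  | apply: is_gmap_add | apply: is_gmap_comp | done ].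

Ltac gadditivity := repeat first
  [ apply: gmap_additive; solve [eassumption | eauto with gdegree]
  | apply: gadditive_comp | apply: gadditive_add ].

Ltac gcomp_assoc := first
  [ rewrite (gcompA (d2 := -1)); last done
  | rewrite (gcompA (d2 := 0)); last done
  | rewrite (gcompA (d2 := 1)); last done
  | rewrite (gcompA (d2 := -2)); last done ].

(* Normal form: sums of left-nested compositions ((f1 \o f2) \o f3) \o ...,
   in which an identity between chains can only be rewritten where the chain
   is a prefix; [grewrite] also rewrites it behind a left factor X. *)
Ltac gnorm := repeat first
  [ gcomp_assoc | rewrite gcomp1r | rewrite gcomp1l; last by gdegree
  | rewrite gcompDl | rewrite gcompNl
  | rewrite gcompDr; last by gadditivity | rewrite gcompNr; last by gadditivity ].

Ltac grewrite E :=
  rewrite ?E; try rewrite !(gcomp_ctx E); try rewrite !(gcomp_ctx3 E).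

Section Perturbation.
Variable R : pzRingType.
Variables (L M : gmod R) (bL : gmap L L) (bM : gmap M M).
Variables (i : gmap L M) (p : gmap M L) (h delta inv : gmap M M).
(* Variables with defining equations rather than definitions, so that [gnorm]
   keeps them as atoms. *)
Variables (A h_inf : gmap M M) (i_inf : gmap L M) (p_inf : gmap M L) (b_inf : gmap L L).
Hypotheses (bL_deg : is_gmap (-1) bL) (bM_deg : is_gmap (-1) bM).
Hypothesis bM_sq : bM \o[-1] bM = 0.
Hypotheses (i_deg : is_gmap 0 i) (p_deg : is_gmap 0 p) (h_deg : is_gmap 1 h).
Hypotheses (delta_deg : is_gmap (-1) delta) (inv_deg : is_gmap 0 inv).
Hypothesis i_chain : bM \o[0] i = i \o[-1] bL.
Hypothesis p_chain : bL \o[0] p = p \o[-1] bM.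
Hypothesis i_p : i \o[0] p = gid M + (bM \o[1] h + h \o[-1] bM).
Hypothesis perturbation : (bM + delta) \o[-1] (bM + delta) = 0.
Hypothesis inv_l : inv \o[0] (gid M - delta \o[1] h) = gid M.
Hypothesis inv_r : (gid M - delta \o[1] h) \o[0] inv = gid M.
Hypothesis A_def : A = inv \o[-1] delta.
Hypothesis i_inf_def : i_inf = i + h \o[-1] (A \o[0] i).
Hypothesis p_inf_def : p_inf = p + p \o[0] (A \o[1] h).
Hypothesis b_inf_def : b_inf = bL + p \o[-1] (A \o[0] i).
Hypothesis h_inf_def : h_inf = h + h \o[-1] A \o[1] h.

Lemma A_deg : is_gmap (-1) A. Proof. by rewrite A_def; gdegree. Qed.
#[local] Hint Resolve A_deg : gdegree.

Lemma delta_comp_bM : delta \o[-1] bM = - (delta \o[-1] delta) - bM \o[-1] delta.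
Proof. by rewrite -[LHS]subr0 -perturbation; gnorm; rewrite bM_sq; zmod_ring. Qed.

Lemma delta_h_A : delta \o[1] h \o[-1] A = A - delta.
Proof.
have : (gid M - delta \o[1] h) \o[-1] A = delta.
  by rewrite A_def (gcompA (d2 := 0)) // inv_r gcomp1l.
by gnorm => e; rewrite -[in RHS]e; zmod_ring.
Qed.

Lemma A_h_delta : A \o[1] h \o[-1] delta = A - delta.
Proof.
have : inv \o[0] (gid M - delta \o[1] h) \o[-1] delta = delta.
  by rewrite inv_l gcomp1l.
by gnorm; rewrite -A_def => e; rewrite -[in RHS]e; zmod_ring.
Qed.

(* The identity A i p A = -(A b + b A), with i p expanded. *)
Lemma A_comp_A : A \o[-1] A = - (A \o[-1] bM + bM \o[-1] A
  + A \o[-1] bM \o[1] h \o[-1] A + A \o[1] h \o[-1] bM \o[-1] A).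
Proof.
set S := A \o[-1] bM + _ + _ + _.
suff S0 : A \o[-1] A + S = 0 by rewrite -[LHS]subr0 -S0; zmod_ring.
set T := A \o[-1] A + S.
have T_deg : is_gmap (-2) T by rewrite /T /S; gdegree.
have T0 : T - delta \o[1] h \o[-2] T = 0.
  rewrite /T /S; gnorm; rewrite delta_h_A; gnorm; rewrite delta_comp_bM; gnorm.
  by grewrite delta_h_A; gnorm; zmod_ring.
rewrite -(gcomp1l T_deg) -inv_l -(gcompA (d3 := -2)) //.
by rewrite gcompDl gcompNl gcomp1l // T0 gcomp0r //; apply: gmap_additive inv_deg.
Qed.

Lemma i_inf_deg : is_gmap 0 i_inf. Proof. by rewrite i_inf_def; gdegree. Qed.
Lemma p_inf_deg : is_gmap 0 p_inf. Proof. by rewrite p_inf_def; gdegree. Qed.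
Lemma h_inf_deg : is_gmap 1 h_inf. Proof. by rewrite h_inf_def; gdegree. Qed.
#[local] Hint Resolve i_inf_deg p_inf_deg h_inf_deg : gdegree.

Lemma delta_i_inf : delta \o[0] i_inf = A \o[0] i.
Proof. by rewrite i_inf_def; gnorm; grewrite delta_h_A; gnorm; zmod_ring. Qed.

Lemma p_inf_delta : p_inf \o[-1] delta = p \o[-1] A.
Proof. by rewrite p_inf_def; gnorm; grewrite A_h_delta; gnorm; zmod_ring. Qed.

Lemma delta_h_inf : delta \o[1] h_inf = A \o[1] h.
Proof. by rewrite h_inf_def; gnorm; grewrite delta_h_A; gnorm; zmod_ring. Qed.

Lemma h_inf_delta : h_inf \o[-1] delta = h \o[-1] A.
Proof. by rewrite h_inf_def; gnorm; grewrite A_h_delta; gnorm; zmod_ring. Qed.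

Lemma i_inf_chain : i_inf \o[-1] b_inf = (bM + delta) \o[0] i_inf.
Proof.
rewrite b_inf_def i_inf_def; gnorm; grewrite (esym i_chain); grewrite i_p; gnorm.
by grewrite A_comp_A; gnorm; grewrite delta_h_A; gnorm; zmod_ring.
Qed.

Lemma p_inf_chain : b_inf \o[0] p_inf = p_inf \o[-1] (bM + delta).
Proof.
rewrite b_inf_def p_inf_def; gnorm; grewrite p_chain; grewrite i_p; gnorm.
by grewrite A_comp_A; gnorm; grewrite A_h_delta; gnorm; zmod_ring.
Qed.

Lemma i_inf_p_inf :
  i_inf \o[0] p_inf = gid M + ((bM + delta) \o[1] h_inf + h_inf \o[-1] (bM + delta)).
Proof.
rewrite i_inf_def p_inf_def h_inf_def; gnorm; grewrite i_p; gnorm.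
by grewrite A_comp_A; gnorm; grewrite delta_h_A; grewrite A_h_delta; gnorm; zmod_ring.
Qed.

Lemma i_comp_p_i_inf_homotopic :
  null_homotopic b_inf bM (i \o[0] (p \o[0] i_inf - gid L)).
Proof.
apply: (null_homotopicP (H := h \o[0] i_inf)); first by gdegree.
gnorm; grewrite i_p; grewrite i_inf_chain; gnorm; grewrite delta_i_inf.
by rewrite i_inf_def; gnorm; zmod_ring.
Qed.

Lemma p_inf_i_comp_p_homotopic :
  null_homotopic bM b_inf ((p_inf \o[0] i - gid L) \o[0] p).
Proof.
apply: (null_homotopicP (H := p_inf \o[1] h)); first by gdegree.
gnorm; grewrite i_p; gnorm; grewrite p_inf_chain; gnorm; grewrite p_inf_delta.
by rewrite p_inf_def; gnorm; zmod_ring.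
Qed.

Lemma p_i_inf_comp_p_inf_homotopic :
  null_homotopic (bM + delta) bL ((p \o[0] i_inf - gid L) \o[0] p_inf).
Proof.
apply: (null_homotopicP (H := p \o[1] h_inf)); first by gdegree.
gnorm; grewrite i_inf_p_inf; gnorm; grewrite p_chain; grewrite delta_h_inf.
by rewrite p_inf_def; gnorm; zmod_ring.
Qed.

Lemma i_inf_comp_p_inf_i_homotopic :
  null_homotopic bL (bM + delta) (i_inf \o[0] (p_inf \o[0] i - gid L)).
Proof.
apply: (null_homotopicP (H := h_inf \o[0] i)); first by gdegree.
gnorm; grewrite i_inf_p_inf; gnorm; grewrite (esym i_chain); grewrite h_inf_delta.
by rewrite i_inf_def; gnorm; zmod_ring.
Qed.

Lemma perturbation_null_homotopies :
  null_homotopic b_inf bM (i \o[0] (p \o[0] i_inf - gid L)) /\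
  null_homotopic bM b_inf ((p_inf \o[0] i - gid L) \o[0] p) /\
  null_homotopic (bM + delta) bL ((p \o[0] i_inf - gid L) \o[0] p_inf) /\
  null_homotopic bL (bM + delta) (i_inf \o[0] (p_inf \o[0] i - gid L)).
Proof.
split; [|split; [|split]].
- exact: i_comp_p_i_inf_homotopic.
- exact: p_inf_i_comp_p_homotopic.
- exact: p_i_inf_comp_p_inf_homotopic.
- exact: i_inf_comp_p_inf_i_homotopic.
Qed.

End Perturbation.

Theorem lemma1p8 (R : pzRingType) (L M : gmod R)
  (bL : gmap L L) (bM : gmap M M) (i : gmap L M) (p : gmap M L) (h : gmap M M)
  (delta : gmap M M) (inv : gmap M M) :
  is_complex bL -> is_complex bM ->
  is_chain_map bL bM i -> is_chain_map bM bL p ->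
  is_gmap 1 h ->
  gequiv (gcomp 0 p i) (gadd (gid M) (gadd (gcomp 1 h bM) (gcomp (-1) bM h))) ->
  (* delta is a perturbation: degree -1 and (b + delta)^2 = 0 *)
  is_gmap (-1) delta ->
  gequiv (gcomp (-1) (gadd bM delta) (gadd bM delta)) (@g0 R M M) ->
  (* delta is small: 1 - delta h is invertible, with inverse inv *)
  is_gmap 0 inv ->
  gequiv (gcomp 0 (gsub (gid M) (gcomp 1 h delta)) inv) (gid M) ->
  gequiv (gcomp 0 inv (gsub (gid M) (gcomp 1 h delta))) (gid M) ->
  let A := gcomp (-1) delta inv in
  let i_inf := gadd i (gcomp (-1) (gcomp 0 i A) h) in
  let p_inf := gadd p (gcomp 0 (gcomp 1 h A) p) in
  let b_inf := gadd bL (gcomp (-1) (gcomp 0 i A) p) in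
  null_homotopic b_inf bM (gcomp 0 (gsub (gcomp 0 i_inf p) (gid L)) i) /\
  null_homotopic bM b_inf (gcomp 0 p (gsub (gcomp 0 i p_inf) (gid L))) /\
  null_homotopic (gadd bM delta) bL (gcomp 0 p_inf (gsub (gcomp 0 i_inf p) (gid L))) /\
  null_homotopic bL (gadd bM delta) (gcomp 0 (gsub (gcomp 0 i p_inf) (gid L)) i_inf).
Proof.
move=> [bL_deg _] [bM_deg /gmap_ext bM_sq] [i_deg /gmap_ext i_chain].
move=> [p_deg /gmap_ext p_chain] h_deg /gmap_ext i_p delta_deg /gmap_ext pert.
move=> inv_deg /gmap_ext inv_l /gmap_ext inv_r A i_inf p_inf b_inf.
exact: (perturbation_null_homotopies bL_deg bM_deg bM_sq i_deg p_deg h_deg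
  delta_deg inv_deg i_chain p_chain i_p pert inv_l inv_r erefl erefl erefl erefl erefl).
Qed.
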